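(* Let $\mathcal{G}$ be a connected undirected unweighted graph with $n\ge 2$ vertices, $s\ne t$ vertices, $\epsilon\in(0,1)$, and let $L$ be an integer with $L\ge 2\kappa(\mathcal{L})\log\frac{n}{\epsilon}$. Then $r_{\mathcal{G},L}(s,t)\approx_\epsilon r_{\mathcal{G}}(s,t)$.
   Context: $\mathbf{D}$ is the degree matrix, $\mathbf{A}$ the adjacency matrix, $\mathbf{L}=\mathbf{D}-\mathbf{A}$, $\mathbf{P}=\mathbf{A}\mathbf{D}^{-1}$, $\mathcal{L}=\mathbf{D}^{-1/2}\mathbf{L}\mathbf{D}^{-1/2}$ the normalized Laplacian, and $\kappa(\mathcal{L})=\lambda_{\max}(\mathcal{L})/\lambda_2(\mathcal{L})$ with $\lambda_2(\mathcal{L})$ the smallest nonzero eigenvalue. $r_{\mathcal{G}}(s,t)=(\mathbf{e}_s-\mathbf{e}_t)^T\mathbf{L}^\dagger(\mathbf{e}_s-\mathbf{e}_t)$ and the $L$-step truncated effective resistance is $r_{\mathcal{G},L}(s,t)=\frac{1}{2}(\mathbf{e}_s-\mathbf{e}_t)^T\mathbf{D}^{-1}\sum_{l=0}^{L}(\frac12\mathbf{I}+\frac12\mathbf{P})^l(\mathbf{e}_s-\mathbf{e}_t)$. $x\approx_\epsilon y$ means $(1-\epsilon)y\le x\le(1+\epsilon)y$; $\log$ is the natural logarithm. *)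

From mathcomp Require Import all_boot all_order all_algebra.
From mathcomp Require Import reals exp.
Set Implicit Arguments. Unset Strict Implicit. Unset Printing Implicit Defensive.
Import Order.TTheory GRing.Theory Num.Theory.
Local Open Scope ring_scope.

Section Graph.
Variables (R : realType) (n : nat) (e : rel 'I_n).

Definition simple_graph := symmetric e /\ irreflexive e.
Definition connected_graph := forall x y : 'I_n, connect e x y.

Definition adjm : 'M[R]_n := \matrix_(i, j) (e i j)%:R.
Definition deg (i : 'I_n) : R := \sum_j adjm i j.
Definition degm : 'M[R]_n := \matrix_(i, j) (deg i *+ (i == j)).
Definition degm_inv : 'M[R]_n := \matrix_(i, j) ((deg i)^-1 *+ (i == j)).
Definition degm_invsqrt : 'M[R]_n :=
  \matrix_(i, j) ((Num.sqrt (deg i))^-1 *+ (i == j)).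
Definition lapm : 'M[R]_n := degm - adjm.
Definition walkm : 'M[R]_n := adjm *m degm_inv.
Definition nlapm : 'M[R]_n := degm_invsqrt *m lapm *m degm_invsqrt.

Definition bvec (s t : 'I_n) : 'cV[R]_n := delta_mx s 0 - delta_mx t 0.

(* effective resistance r_G(s,t) = b^T L^+ b, where Lp is the pseudoinverse *)
Definition eff_res (Lp : 'M[R]_n) (s t : 'I_n) : R :=
  ((bvec s t)^T *m Lp *m bvec s t) 0 0.

Definition trunc_eff_res (L : nat) (s t : 'I_n) : R :=
  2^-1 * ((bvec s t)^T *m degm_inv
     *m (\sum_(0 <= l < L.+1) (2^-1 *: 1%:M + 2^-1 *: walkm) ^+ l)
     *m bvec s t) 0 0.
End Graph.

Definition is_pinv (R : realType) (n : nat) (M X : 'M[R]_n) :=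
  [/\ M *m X *m M = M, X *m M *m X = X, (M *m X)^T = M *m X & (X *m M)^T = X *m M].

Definition is_max_eigen (R : realType) (n : nat) (M : 'M[R]_n) (lmax : R) :=
  eigenvalue M lmax /\ forall a, eigenvalue M a -> a <= lmax.

Definition is_min_nz_eigen (R : realType) (n : nat) (M : 'M[R]_n) (l2 : R) :=
  [/\ eigenvalue M l2, l2 != 0 & forall a, eigenvalue M a -> a != 0 -> l2 <= a].

Definition approx_eps (R : realType) (eps x y : R) :=
  (1 - eps) * y <= x /\ x <= (1 + eps) * y.

From mathcomp Require Import all_boot all_order all_algebra.
From mathcomp Require Import reals exp sequences.
From mathcomp Require Import spectral complex.
From mathcomp Require Import ring lra zify.
Set Implicit Arguments. Unset Strict Implicit. Unset Printing Implicit Defensive.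
Import Order.TTheory GRing.Theory Num.Theory.
Local Open Scope ring_scope.

(* Write N for the normalized Laplacian and S = I - N/2.  Conjugation by D^{1/2}
   turns the lazy walk (I + P)/2 into S.  Since b = e_s - e_t is orthogonal to
   the constants, which span the kernel of the Laplacian of a connected graph,
   b^T = w L for some w; with z = w D^{1/2} both resistances become quadratic
   forms in z: r(s,t) = z N z^T and, summing the geometric series,
   r_L(s,t) = z N z^T - z S^{L+1} N z^T.  The eigenvalues of N lie in [0, 2],
   the nonzero ones in [lambda_2, lambda_max], and lambda_max >= 1 because the
   diagonal of N is 1; hence 0 <= x (1 - x/2)^{L+1} <= eps x on the spectrum,
   and a unitary diagonalization of N over C lifts these scalar inequalities
   to the quadratic forms. *)

Section QuadraticForm.
Variables (R : comPzRingType) (n : nat).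

Definition qform (M : 'M[R]_n) (u : 'rV[R]_n) : R := (u *m M *m u^T) 0 0.

Lemma qformE M u : qform M u = \sum_i \sum_j u 0 i * M i j * u 0 j.
Proof.
rewrite /qform mxE; under eq_bigr => j _ do rewrite !mxE mulr_suml.
exact: exchange_big.
Qed.

Lemma qformD M1 M2 u : qform (M1 + M2) u = qform M1 u + qform M2 u.
Proof. by rewrite /qform mulmxDr mulmxDl mxE. Qed.

Lemma qformZ a M u : qform (a *: M) u = a * qform M u.
Proof. by rewrite /qform -scalemxAr -scalemxAl mxE. Qed.

Lemma qformB M1 M2 u : qform (M1 - M2) u = qform M1 u - qform M2 u.
Proof. by rewrite -scaleN1r qformD qformZ mulN1r. Qed.

Lemma qform_scalar a u : qform a%:M u = a * qform 1%:M u.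
Proof. by rewrite -qformZ scalemx1. Qed.

Lemma qform_congr (B M : 'M[R]_n) u : qform (B *m M *m B^T) u = qform M (u *m B).
Proof. by rewrite /qform trmx_mul !mulmxA. Qed.

Lemma qform1_delta i : qform 1%:M (delta_mx 0 i) = 1.
Proof. by rewrite /qform mulmx1 -rowE trmx_delta !mxE !eqxx. Qed.

End QuadraticForm.

Lemma qform1_gt0 (R : realDomainType) n (v : 'rV[R]_n) : v != 0 -> 0 < qform 1%:M v.
Proof.
move=> v_neq0; rewrite /qform mulmx1 mxE.
have vv_ge0 j : 0 <= v 0 j * v^T j 0 by rewrite mxE -expr2 sqr_ge0.
rewrite lt_def sumr_ge0 // andbT; apply: contra v_neq0.
move=> /eqP/(psumr_eq0P (fun j _ => vv_ge0 j)) v0.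
apply/eqP/rowP => j; have /eqP := v0 j isT; rewrite !mxE mulf_eq0 orbb.
by move/eqP.
Qed.

Section SymmetricFunctionalCalculus.
Variables (R : rcfType) (n : nat) (N : 'M[R]_n.+1).
Hypothesis N_sym : N^T = N.
Local Notation toC := (real_complex R).

Lemma qform_horner_ge0 (p : {poly R}) (z : 'rV[R]_n.+1) :
  (forall x, eigenvalue N x -> 0 <= p.[x]) -> 0 <= qform (horner_mx N p) z.
Proof.
move=> p_ge0.
set Nc := map_mx toC N.
have Nc_herm : Nc \is hermsymmx.
  rewrite is_hermitianmxE expr0 scale1r; apply/eqP/matrixP => i j.
  rewrite !mxE -{1}N_sym mxE conj_Creal //.
  by apply/complex_realP; exists (N j i).
have /orthomx_spectralP Nc_diag := hermitian_normalmx Nc_herm.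
set P := spectralmx Nc in Nc_diag; set d := spectral_diag Nc in Nc_diag.
have P_unitary : P \is unitarymx := spectral_unitarymx Nc.
have P_unit : P \in unitmx := spectral_unit Nc.
have d_real i : d 0 i = toC (complex.Re (d 0 i)).
  by rewrite RRe_real //; have /mxOverP := hermitian_spectral_diag_real Nc_herm; apply.
have d_eigen i : eigenvalue N (complex.Re (d 0 i)).
  rewrite -(eigenvalue_map toC) -/Nc; suff : eigenvalue Nc (d 0 i) by rewrite {1}d_real.
  apply/eigenvalueP; exists (row i P).
    by rewrite -row_mul {1}Nc_diag !mulmxA mulmxV // mul1mx row_mul row_diag_mx -scalemxAl -rowE.
  apply/eqP => /(congr1 (mulmx^~ (invmx P))); rewrite -row_mul mulmxV // mul0mx.
  by move/rowP/(_ i); rewrite !mxE eqxx => /eqP; rewrite oner_eq0.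
set zc := map_mx toC z.
have qform_spectral : toC (qform (horner_mx N p) z)
    = \sum_j (map_poly toC p).[d 0 j] * ((zc *m invmx P) 0 j * ((zc *m invmx P) 0 j)^*).
  have -> : toC (qform (horner_mx N p) z) = qform (map_mx toC (horner_mx N p)) zc.
    transitivity ((map_mx toC (z *m horner_mx N p *m z^T)) 0 0); first by rewrite mxE.
    by rewrite !map_mxM -map_trmx.
  rewrite map_horner_mx -/Nc Nc_diag horner_mx_uconjC // horner_mx_diag.
  rewrite /qform !mulmxA -[_ *m P *m _]mulmxA mxE; apply: eq_bigr => j _.
  rewrite mul_mx_diag !mxE mulrAC mulrC; congr (_ * (_ * _)).
  rewrite invmx_unitary // rmorph_sum /=; apply: eq_bigr => l _.
  by rewrite !mxE rmorphM /= conjCK conj_Creal 1?mulrC //; apply/complex_realP; exists (z 0 l).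
rewrite -ler0c qform_spectral; apply: sumr_ge0 => j _; apply: mulr_ge0; last exact: mul_conjC_ge0.
by rewrite d_real horner_map ler0c; apply: p_ge0.
Qed.

Lemma qform_horner_le (p q : {poly R}) (z : 'rV[R]_n.+1) :
  (forall x, eigenvalue N x -> p.[x] <= q.[x]) ->
  qform (horner_mx N p) z <= qform (horner_mx N q) z.
Proof.
move=> le_pq; rewrite -subr_ge0 -qformB -rmorphB; apply: qform_horner_ge0 => x Nx.
by rewrite hornerD hornerN subr_ge0 le_pq.
Qed.

End SymmetricFunctionalCalculus.

Lemma exprn_le_expR (R : realType) (y : R) k :
  0 <= y <= 1 -> (1 - y) ^+ k <= expR (- y * k%:R).
Proof.
case/andP => y_ge0 y_le1; rewrite expRM_natr.
apply: lerXn2r; rewrite ?nnegrE ?expR_ge0 ?subr_ge0 //.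
by have := expR_ge1Dx (- y); lra.
Qed.

Lemma lazy_decay_le (R : realType) (n L : nat) (eps lmax l2 x : R) :
  0 < eps < 1 -> (1 <= n)%N -> 1 <= lmax -> 0 < l2 -> l2 <= x -> x <= 2 ->
  2 * (lmax / l2) * ln (n%:R / eps) <= L%:R -> (1 - 2^-1 * x) ^+ L.+1 <= eps.
Proof.
move=> /andP[eps_gt0 eps_lt1] n_ge1 lmax_ge1 l2_gt0 l2_le_x x_le2 L_ge.
set c := ln (n%:R / eps) in L_ge.
have c_ge : - ln eps <= c.
  rewrite -lnV ?posrE // ler_ln ?posrE ?invr_gt0 ?divr_gt0 ?ltr0n //.
  by rewrite -[leLHS]mul1r ler_pM2r ?invr_gt0 // ler1n.
have ln_eps_le0 : ln eps <= 0 by apply: ln_le0; lra.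
have x_ratio : lmax <= lmax / l2 * x.
  by rewrite -mulrA ler_peMr ?ler_pdivlMl ?mulr1; lra.
have xL_ge : - ln eps <= 2^-1 * x * L%:R.
  have : x * (2 * (lmax / l2) * c) <= x * L%:R by rewrite ler_wpM2l //; lra.
  have : lmax * c <= lmax / l2 * x * c by rewrite ler_wpM2r //; lra.
  have : c <= lmax * c by rewrite ler_peMl //; lra.
  lra.
apply: le_trans (_ : (1 - 2^-1 * x) ^+ L <= _).
  by rewrite exprSr ler_piMr ?exprn_ge0 //; lra.
apply: le_trans (exprn_le_expR _ _) _; first by apply/andP; lra.
by rewrite -[leRHS](lnK (x:=eps)) ?posrE // ler_expR; lra.
Qed.

Lemma diag_mx_row1 (R : pzSemiRingType) n (f : 'I_n -> R) :
  (forall i, f i = 1) -> diag_mx (\row_i f i) = 1%:M.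
Proof. by move=> f1; rewrite -diag_const_mx; congr diag_mx; apply/rowP => i; rewrite !mxE f1. Qed.

Lemma bvec_orth_ones (R : realType) n (s t : 'I_n) :
  (bvec R s t)^T *m (const_mx 1 : 'cV[R]_n) = 0.
Proof.
by apply/matrixP => i j; rewrite /bvec linearB /= !trmx_delta mulmxBl -!rowE !mxE subrr.
Qed.

Lemma deg_gt0 (R : realType) n (e : rel 'I_n) :
  connected_graph e -> (1 < n)%N -> forall i, 0 < deg R e i.
Proof.
move=> e_conn n_gt1 i.
have [j j_neq_i] : exists j : 'I_n, j != i.
  have : (0 < #|predC1 i|)%N by rewrite cardC1 card_ord -subn1 subn_gt0.
  by case/card_gt0P => j; exists j.
case/connectP: (e_conn i j) => [[|y p]] /=; first by move=> _ ji; rewrite ji eqxx in j_neq_i.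
case/andP => e_iy _ _; rewrite /deg (bigD1 y) //= mxE e_iy ltr_pwDl //.
by apply: sumr_ge0 => k _; rewrite mxE ler0n.
Qed.

(* Vertices are ['I_n.+1] so that square matrices form a ring, as [horner_mx] requires. *)
Section Graph.
Variables (R : realType) (n : nat) (e : rel 'I_n.+1).
Hypotheses (e_sym : symmetric e) (e_irr : irreflexive e).
Hypothesis deg_pos : forall i, 0 < deg R e i.

Local Notation A := (adjm R e).
Local Notation d := (deg R e).
Local Notation D := (degm R e).
Local Notation Dinv := (degm_inv R e).
Local Notation H := (degm_invsqrt R e).
Local Notation Lap := (lapm R e).
Local Notation N := (nlapm R e).
Local Notation W := (walkm R e).

(* [degm_sqrt] = D^{1/2} conjugates the lazy walk (I + P)/2 into [nlazym]. *)
Definition degm_sqrt : 'M[R]_n.+1 := diag_mx (\row_i Num.sqrt (d i)).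
Definition nlazym : 'M[R]_n.+1 := 1%:M - 2^-1 *: N.

Local Notation G := degm_sqrt.
Local Notation S := nlazym.

Lemma degmE : D = diag_mx (\row_i d i).
Proof. by apply/matrixP => i j; rewrite !mxE. Qed.

Lemma degm_invE : Dinv = diag_mx (\row_i (d i)^-1).
Proof. by apply/matrixP => i j; rewrite !mxE. Qed.

Lemma degm_invsqrtE : H = diag_mx (\row_i (Num.sqrt (d i))^-1).
Proof. by apply/matrixP => i j; rewrite !mxE. Qed.

Lemma sqrt_deg_neq0 i : Num.sqrt (d i) != 0.
Proof. by rewrite gt_eqF ?sqrtr_gt0. Qed.

Lemma invsqrt_deg_sandwich i : (Num.sqrt (d i))^-1 * d i / Num.sqrt (d i) = 1.
Proof. by rewrite mulrAC -invfM -expr2 sqr_sqrtr ?ltW // mulVf ?gt_eqF. Qed.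

Lemma degm_sqrtK : G *m H = 1%:M.
Proof.
by rewrite degm_invsqrtE mulmx_diag diag_mx_row1 // => i; rewrite !mxE mulfV ?sqrt_deg_neq0.
Qed.

Lemma degm_invsqrtK : H *m G = 1%:M.
Proof.
by rewrite degm_invsqrtE mulmx_diag diag_mx_row1 // => i; rewrite !mxE mulVf ?sqrt_deg_neq0.
Qed.

Lemma degm_invsqrt_sqr : H *m H = Dinv.
Proof.
rewrite degm_invsqrtE mulmx_diag degm_invE; congr diag_mx; apply/rowP => i.
by rewrite !mxE -invfM -expr2 sqr_sqrtr // ltW.
Qed.

Lemma degm_inv_sqrt : Dinv *m G = H.
Proof. by rewrite -degm_invsqrt_sqr -mulmxA degm_invsqrtK mulmx1. Qed.

Lemma degmK : D *m Dinv = 1%:M.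
Proof.
by rewrite degmE degm_invE mulmx_diag diag_mx_row1 // => i; rewrite !mxE mulfV ?gt_eqF.
Qed.

Lemma degm_invsqrt_degm : H *m D *m H = 1%:M.
Proof.
by rewrite degm_invsqrtE degmE !mulmx_diag diag_mx_row1 // => i; rewrite !mxE invsqrt_deg_sandwich.
Qed.

Lemma adjm_sym : A^T = A.
Proof. by apply/matrixP => i j; rewrite !mxE e_sym. Qed.

Lemma degm_invsqrt_sym : H^T = H.
Proof. by rewrite degm_invsqrtE tr_diag_mx. Qed.

Lemma degm_sqrt_sym : G^T = G.
Proof. exact: tr_diag_mx. Qed.

Lemma lapm_sym : Lap^T = Lap.
Proof. by rewrite /lapm linearB /= degmE tr_diag_mx -degmE adjm_sym. Qed.

Lemma nlapm_sym : N^T = N.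
Proof. by rewrite /nlapm !trmx_mul degm_invsqrt_sym lapm_sym mulmxA. Qed.

Lemma lapm_nlapm : Lap = G *m N *m G.
Proof.
by rewrite /nlapm !mulmxA degm_sqrtK mul1mx -mulmxA degm_invsqrtK mulmx1.
Qed.

Lemma nlapm_adjm : N = 1%:M - H *m A *m H.
Proof. by rewrite /nlapm /lapm mulmxBr mulmxBl degm_invsqrt_degm. Qed.

Lemma lazy_walkmE : 2^-1 *: 1%:M + 2^-1 *: W = G *m S *m H.
Proof.
rewrite /nlazym mulmxBr mulmxBl mulmx1 degm_sqrtK -scalemxAr -scalemxAl /nlapm.
rewrite !mulmxA degm_sqrtK mul1mx -mulmxA degm_invsqrt_sqr /lapm mulmxBl degmK.
by rewrite -/(walkm R e); apply/matrixP => i j; rewrite !mxE; lra.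
Qed.

Lemma lazy_walkmX k : (2^-1 *: 1%:M + 2^-1 *: W) ^+ k = G *m S ^+ k *m H.
Proof.
elim: k => [|k IHk]; first by rewrite !expr0 mulmx1 degm_sqrtK.
rewrite exprS IHk lazy_walkmE -mulmxE !mulmxA -(mulmxA _ H) degm_invsqrtK mulmx1.
by rewrite exprS -mulmxE !mulmxA.
Qed.

Lemma qform_degmDadjm (c : R) (u : 'rV[R]_n.+1) : c ^+ 2 = 1 ->
  qform (D + c *: A) u = 2^-1 * \sum_i \sum_j A i j * (u 0 i + c * u 0 j) ^+ 2.
Proof.
move=> c2.
have qD : qform D u = \sum_i \sum_j A i j * u 0 i ^+ 2.
  rewrite /qform degmE mul_mx_diag mxE; apply: eq_bigr => i _.
  by rewrite !mxE /deg mulr_sumr mulr_suml; apply: eq_bigr => j _; ring.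
have qA : qform A u = \sum_i \sum_j A i j * (u 0 i * u 0 j).
  by rewrite qformE; apply: eq_bigr => i _; apply: eq_bigr => j _; ring.
have swap (f : 'I_n.+1 -> R) : \sum_i \sum_j A i j * f j = \sum_i \sum_j A i j * f i.
  by rewrite exchange_big; apply: eq_bigr => i _; apply: eq_bigr => j _; rewrite !mxE e_sym.
rewrite (_ : \sum_i _ = \sum_i \sum_j (A i j * u 0 i ^+ 2 + A i j * u 0 j ^+ 2
    + 2 * c * (A i j * (u 0 i * u 0 j)))); last first.
  by apply: eq_bigr => i _; apply: eq_bigr => j _; rewrite sqrrD exprMn c2; ring.
under eq_bigr => i _ do rewrite !big_split /= -mulr_sumr.
by rewrite !big_split /= -mulr_sumr swap qformD qformZ qD qA; field.
Qed.

Lemma qform_degmDadjm_ge0 (c : R) (u : 'rV[R]_n.+1) : c ^+ 2 = 1 -> 0 <= qform (D + c *: A) u.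
Proof.
move=> c2; rewrite qform_degmDadjm // mulr_ge0 ?invr_ge0 ?ler0n //.
by do 2!apply: sumr_ge0 => ? _; rewrite mulr_ge0 ?sqr_ge0 // mxE ler0n.
Qed.

Lemma lapmE : Lap = D + (-1) *: A.
Proof. by rewrite scaleN1r. Qed.

Lemma nlapm_eigen_range x : eigenvalue N x -> 0 <= x <= 2.
Proof.
case/eigenvalueP => v vN v_neq0.
have v_gt0 := qform1_gt0 v_neq0.
have qN : qform N v = x * qform 1%:M v by rewrite /qform vN -scalemxAl mxE mulmx1.
have conjH M : qform (H *m M *m H) v = qform M (v *m H).
  by rewrite -{2}degm_invsqrt_sym qform_congr.
apply/andP; split.
  by rewrite -(pmulr_lge0 _ v_gt0) -qN /nlapm conjH lapmE qform_degmDadjm_ge0 // sqrrN expr1n.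
have signless : qform (H *m (D + 1 *: A) *m H) v = (2 - x) * qform 1%:M v.
  rewrite scale1r mulmxDr mulmxDl degm_invsqrt_degm qformD.
  by rewrite mulrBl -qN nlapm_adjm qformB; ring.
rewrite -subr_ge0 -(pmulr_lge0 _ v_gt0) -signless.
by rewrite conjH qform_degmDadjm_ge0 // expr1n.
Qed.

Lemma nlapm_diag (s : 'I_n.+1) : qform N (delta_mx 0 s) = 1.
Proof.
rewrite /qform -rowE trmx_delta -colE /nlapm degm_invsqrtE mul_mx_diag mul_diag_mx !mxE.
by rewrite eqxx mulr1n e_irr /= subr0 invsqrt_deg_sandwich.
Qed.

Lemma lapm_ker_const (u : 'rV[R]_n.+1) : connected_graph e -> u *m Lap = 0 ->
  forall x y, u 0 x = u 0 y.
Proof.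
move=> e_conn uL0.
have /eqP : qform (D + (-1) *: A) u = 0 by rewrite -lapmE /qform uL0 mul0mx mxE.
rewrite qform_degmDadjm ?sqrrN ?expr1n // mulf_eq0 invr_eq0 pnatr_eq0 /= => /eqP q0.
have term_ge0 i j : 0 <= A i j * (u 0 i + -1 * u 0 j) ^+ 2.
  by rewrite mulr_ge0 ?sqr_ge0 // mxE ler0n.
have row_ge0 i : 0 <= \sum_j A i j * (u 0 i + -1 * u 0 j) ^+ 2.
  by apply: sumr_ge0 => j _.
have edge_eq i j : e i j -> u 0 i = u 0 j.
  move=> e_ij; have row_i0 := psumr_eq0P (fun k _ => row_ge0 k) q0 (i:=i) isT.
  have /eqP := psumr_eq0P (fun k _ => term_ge0 i k) row_i0 (i:=j) isT.
  by rewrite mxE e_ij mul1r sqrf_eq0 mulN1r subr_eq0 => /eqP.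
move=> x y; case/connectP: (e_conn x y) => p + ->.
elim: p x => [|z p IHp] x //= /andP[e_xz xz_path].
by rewrite (edge_eq x z e_xz) IHp.
Qed.

Lemma lapm_row_space (b : 'rV[R]_n.+1) : connected_graph e ->
  b *m (const_mx 1 : 'cV[R]_n.+1) = 0 -> exists w, b = w *m Lap.
Proof.
move=> e_conn b_orth; pose ones : 'cV[R]_n.+1 := const_mx 1.
have rank_ker : (\rank (kermx Lap) <= 1)%N.
  suff /mxrankS : (kermx Lap <= ones^T)%MS by move/leq_trans; apply; exact: rank_leq_row.
  apply/row_subP => i; set u := row i (kermx Lap).
  have uL0 : u *m Lap = 0 by rewrite -row_mul mulmx_ker row0.
  suff -> : u = u 0 0 *: ones^T by rewrite scalemx_sub.
  apply/rowP => j; rewrite [RHS]mxE [ones^T _ _]mxE [ones _ _]mxE mulr1.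
  exact: lapm_ker_const.
have L_ones : (Lap <= kermx ones)%MS.
  apply/sub_kermxP/matrixP => i j; rewrite /lapm mulmxBl degmE mul_diag_mx !mxE /deg.
  by apply/eqP; rewrite mulr1 subr_eq0; apply/eqP/eq_bigr => k _; rewrite [ones _ _]mxE mulr1.
have rank_ones : \rank ones = 1%N.
  apply/eqP; rewrite eqn_leq rank_leq_col lt0n mxrank_eq0.
  by apply/eqP => /matrixP /(_ 0 0) /eqP; rewrite !mxE oner_eq0.
have ker_ones_L : (kermx ones <= Lap)%MS.
  rewrite -(mxrank_leqif_sup L_ones).2 mxrank_ker rank_ones.
  have rank_L := mxrankS L_ones; rewrite mxrank_ker rank_ones in rank_L.
  by rewrite mxrank_ker in rank_ker; apply/eqP; lia.
have /submxP [w ->] := submx_trans (introT sub_kermxP b_orth) ker_ones_L.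
by exists w.
Qed.

Section Resistances.
Variables (s t : 'I_n.+1) (w : 'rV[R]_n.+1).
Hypothesis bvec_lapm : (bvec R s t)^T = w *m Lap.
Local Notation z := (w *m G).

Lemma eff_res_qform (Lp : 'M[R]_n.+1) : is_pinv Lap Lp -> eff_res Lp s t = qform N z.
Proof.
case=> LLpL _ _ _; rewrite /eff_res.
have -> : bvec R s t = (w *m Lap)^T by rewrite -bvec_lapm trmxK.
rewrite trmxK trmx_mul lapm_sym !mulmxA -(mulmxA w) -(mulmxA w) LLpL.
by rewrite -/(qform Lap w) lapm_nlapm -{2}degm_sqrt_sym qform_congr.
Qed.

Lemma trunc_eff_res_qform L :
  trunc_eff_res R e L s t = qform N z - qform (S ^+ L.+1 *m N) z.
Proof.
have bH : (bvec R s t)^T *m H = z *m N.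
  by rewrite bvec_lapm lapm_nlapm !mulmxA -(mulmxA _ G H) degm_sqrtK mulmx1.
have Hb : H *m bvec R s t = N *m z^T.
  by rewrite -[bvec R s t]trmxK -[H]degm_invsqrt_sym -trmx_mul bH trmx_mul nlapm_sym.
have geom : N *m (\sum_(0 <= l < L.+1) S ^+ l) = 2%:R *: (1%:M - S ^+ L.+1).
  have -> : N = 2%:R *: (1%:M - S).
    by rewrite /nlazym opprB addrC subrK scalerA mulfV ?scale1r ?pnatr_eq0.
  rewrite -scalemxAl big_mkord mulmxE; congr (_ *: _).
  by rewrite -[in RHS]opprB subrX1 -mulNr; congr (_ * _); exact/esym/opprB.
rewrite /trunc_eff_res; under eq_bigr => l _ do rewrite lazy_walkmX.
rewrite -mulmx_suml -mulmx_sumr !mulmxA -(mulmxA _ Dinv) degm_inv_sqrt bH.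
rewrite -(mulmxA _ H) Hb -(mulmxA z N) geom -scalemxAr -scalemxAl mxE mulKf ?pnatr_eq0 //.
by rewrite mulmxA -(mulmxA z) mulmxBl mul1mx -qformB /qform !mulmxA.
Qed.

End Resistances.

Lemma horner_mx_lazy_tail k : horner_mx N ((1 - 2^-1 *: 'X) ^+ k * 'X) = S ^+ k *m N.
Proof. by rewrite rmorphM rmorphXn rmorphB rmorph1 /= horner_mxZ horner_mx_X mulmxE. Qed.

Lemma qform_lazy_tail_ge0 k (z : 'rV[R]_n.+1) : 0 <= qform (S ^+ k *m N) z.
Proof.
rewrite -horner_mx_lazy_tail; apply: qform_horner_ge0 nlapm_sym _ _ _ => x /nlapm_eigen_range.
by case/andP => x_ge0 x_le2; rewrite !hornerE mulr_ge0 ?exprn_ge0 //; lra.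
Qed.

Lemma max_eigen_ge1 lmax : is_max_eigen N lmax -> 1 <= lmax.
Proof.
case=> _ lmax_max.
have := qform_horner_le nlapm_sym (delta_mx 0 0) (p := 'X) (q := lmax%:P).
rewrite horner_mx_X horner_mx_C nlapm_diag qform_scalar qform1_delta mulr1; apply.
by move=> x /lmax_max; rewrite hornerX hornerC.
Qed.

Lemma qform_lazy_tail_le (eps lmax l2 : R) L (z : 'rV[R]_n.+1) :
  0 < eps < 1 -> is_max_eigen N lmax -> is_min_nz_eigen N l2 ->
  2 * (lmax / l2) * ln (n.+1%:R / eps) <= L%:R ->
  qform (S ^+ L.+1 *m N) z <= eps * qform N z.
Proof.
move=> eps01 /max_eigen_ge1 lmax_ge1 [l2_eigen l2_neq0 l2_min] L_ge.
have /andP[l2_ge0 _] := nlapm_eigen_range l2_eigen.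
have l2_gt0 : 0 < l2 by rewrite lt_def l2_neq0.
rewrite -horner_mx_lazy_tail -qformZ -{2}(horner_mx_X N) -horner_mxZ.
apply: qform_horner_le nlapm_sym _ _ _ _ => x x_eigen.
have /andP[x_ge0 x_le2] := nlapm_eigen_range x_eigen.
rewrite !hornerE; have [-> | x_neq0] := eqVneq x 0; first by rewrite !mulr0.
rewrite mulrC [eps * x]mulrC ler_wpM2l //.
exact: lazy_decay_le eps01 (ltn0Sn n) lmax_ge1 l2_gt0 (l2_min x x_eigen x_neq0) x_le2 L_ge.
Qed.

End Graph.

Theorem lemma3p2 (R : realType) (n : nat) (e : rel 'I_n) (s t : 'I_n)
  (eps lmax l2 : R) (Lp : 'M[R]_n) (L : nat) :
  simple_graph e -> connected_graph e -> (2 <= n)%N -> s != t ->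
  0 < eps < 1 ->
  is_max_eigen (nlapm R e) lmax -> is_min_nz_eigen (nlapm R e) l2 ->
  is_pinv (lapm R e) Lp ->
  2 * (lmax / l2) * ln (n%:R / eps) <= L%:R ->
  approx_eps eps (trunc_eff_res R e L s t) (eff_res Lp s t).
Proof.
case: n e s t Lp => [//|n] e s t Lp [e_sym e_irr] e_conn n_ge2 _.
move=> eps01 lmax_max l2_min Lp_pinv L_ge.
have deg_pos := deg_gt0 R e_conn n_ge2.
have [w bvec_lapm] := lapm_row_space e_sym e_conn (bvec_orth_ones R s t).
rewrite /approx_eps (eff_res_qform e_sym deg_pos bvec_lapm Lp_pinv).
rewrite (trunc_eff_res_qform e_sym deg_pos bvec_lapm).
set z := w *m degm_sqrt R e.
have tail_ge0 := qform_lazy_tail_ge0 e_sym deg_pos L.+1 z.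
have tail_le := qform_lazy_tail_le e_sym e_irr deg_pos z eps01 lmax_max l2_min L_ge.
case/andP: eps01 => eps_gt0 _; split; nra.
Qed.
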